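(* Let $(X,T)$ be a topologically transitive system. Then either $(X,T)$ is thickly sensitive (and then $\mathrm{Eq}_{\mathrm{syn}}(X,T)=\varnothing$), or $\mathrm{Tran}(X,T)\subset \mathrm{Eq}_{\mathrm{syn}}(X,T)$. In particular, if $(X,T)$ is minimal then it is either thickly sensitive or syndetically equicontinuous.
   Context: $(X,\varrho)$ compact metric, $T$ continuous surjection. $S_T(U,\delta)=\{n\in\mathbb{N}:\exists x_1,x_2\in U,\ \varrho(T^nx_1,T^nx_2)>\delta\}$ and $J_T(U,\delta)=\mathbb N\setminus S_T(U,\delta)$. A set $\mathcal S\subset\mathbb N$ is thick if it contains arbitrarily long blocks of consecutive integers, syndetic if it has bounded gaps (there is $m$ with $\mathcal S\cap\{n,\dots,n+m\}\ne\varnothing$ for all $n$). $(X,T)$ is thickly sensitive if there is $\delta>0$ with $S_T(U,\delta)$ thick for all opene $U$. A point $x$ is syndetically equicontinuous if for every $\varepsilon>0$ there is a neighborhood $U$ of $x$ with $J_T(U,\varepsilon)$ syndetic; $\mathrm{Eq}_{\mathrm{syn}}(X,T)$ is the set of such points, and $(X,T)$ is syndetically equicontinuous if $\mathrm{Eq}_{\mathrm{syn}}(X,T)=X$. $\mathrm{Tran}(X,T)$ is the set of points with dense orbit; transitive means $\mathrm{Tran}(X,T)\ne\varnothing$; minimal means $\mathrm{Tran}(X,T)=X$. *)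

From Stdlib Require Import Reals List.
Open Scope R_scope.

Section Defs.
Context {X : Type} (d : X -> X -> R).

Definition is_metric : Prop :=
  (forall x y, 0 <= d x y) /\
  (forall x y, d x y = 0 <-> x = y) /\
  (forall x y, d x y = d y x) /\
  (forall x y z, d x z <= d x y + d y z).

Definition ball (x : X) (r : R) : X -> Prop := fun y => d x y < r.

Definition is_open (U : X -> Prop) : Prop :=
  forall x, U x -> exists r, 0 < r /\ forall y, ball x r y -> U y.

Definition opene (U : X -> Prop) : Prop := is_open U /\ exists x, U x.

Definition neighborhood (x : X) (U : X -> Prop) : Prop :=
  exists r, 0 < r /\ forall y, ball x r y -> U y.

Definition compact_metric : Prop :=
  forall (I : Type) (U : I -> X -> Prop),
    (forall i, is_open (U i)) -> (forall x, exists i, U i x) ->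
    exists l : list I, forall x, exists i, In i l /\ U i x.

Definition continuous_map (T : X -> X) : Prop :=
  forall x eps, 0 < eps -> exists delta, 0 < delta /\
    forall y, d x y < delta -> d (T x) (T y) < eps.

Definition surjective_map (T : X -> X) : Prop := forall y, exists x, T x = y.

Definition iter (T : X -> X) (n : nat) (x : X) : X := Nat.iter n T x.

Definition S_T (T : X -> X) (U : X -> Prop) (delta : R) : nat -> Prop :=
  fun n => exists x1 x2, U x1 /\ U x2 /\ d (iter T n x1) (iter T n x2) > delta.
Definition J_T (T : X -> X) (U : X -> Prop) (delta : R) : nat -> Prop :=
  fun n => ~ S_T T U delta n.

Definition thick (S : nat -> Prop) : Prop :=
  forall L : nat, exists n : nat, forall k : nat, (k < L)%nat -> S (n + k)%nat.

Definition syndetic (S : nat -> Prop) : Prop :=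
  exists m : nat, forall n : nat, exists k : nat, (n <= k <= n + m)%nat /\ S k.

Definition thickly_sensitive (T : X -> X) : Prop :=
  exists delta, 0 < delta /\ forall U, opene U -> thick (S_T T U delta).

Definition syn_equicontinuous_point (T : X -> X) (x : X) : Prop :=
  forall eps, 0 < eps -> exists U, neighborhood x U /\ syndetic (J_T T U eps).

Definition syndetically_equicontinuous (T : X -> X) : Prop :=
  forall x, syn_equicontinuous_point T x.

Definition Tran (T : X -> X) (x : X) : Prop :=
  forall V, opene V -> exists n, V (iter T n x).

Definition top_transitive (T : X -> X) : Prop := exists x, Tran T x.
Definition minimal_system (T : X -> X) : Prop := forall x, Tran T x.
End Defs.

(* If T is not thickly sensitive, then for every eps > 0 some nonempty open U has
   S_T(U, eps) not thick, so its complement J_T(U, eps) is syndetic.  A transitive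
   point x enters U at some time n, and by continuity of T^n a whole neighbourhood W
   of x is mapped into U; then J_T(W, eps) contains J_T(U, eps) shifted by n and is
   syndetic as well.  Conversely, a thick set cannot have syndetic complement, and
   every neighbourhood of a point contains a nonempty open ball, so thick sensitivity
   rules out syndetically equicontinuous points. *)
From Stdlib Require Import Reals Lra Lia Classical.
Open Scope R_scope.

Section Iterates.
Context {X : Type} (d : X -> X -> R) (T : X -> X).

Lemma iter_add (m n : nat) (x : X) : iter T (m + n) x = iter T m (iter T n x).
Proof. unfold iter; induction m as [|m IH]; simpl; congruence. Qed.

Lemma iter_continuous :
  continuous_map d T -> forall n, continuous_map d (iter T n).
Proof.
  intros Hc n; induction n as [|n IH]; intros x eps He.
  - exists eps; split; auto.
  - destruct (Hc (iter T n x) eps He) as [d1 [Hd1 H1]].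
    destruct (IH x d1 Hd1) as [d2 [Hd2 H2]].
    exists d2; split; auto; intros y Hy; apply H1, H2, Hy.
Qed.

Lemma S_T_preimage (U : X -> Prop) (eps : R) (n k : nat) :
  S_T d T (fun y => U (iter T n y)) eps (k + n) -> S_T d T U eps k.
Proof.
  intros [y1 [y2 [H1 [H2 H3]]]].
  exists (iter T n y1), (iter T n y2); rewrite <- !iter_add; auto.
Qed.

End Iterates.

Lemma ball_opene {X : Type} (d : X -> X -> R) (x : X) (r : R) :
  is_metric d -> 0 < r -> opene d (ball d x r).
Proof.
  intros [_ [Hzero [_ Htri]]] Hr; unfold ball; split.
  - intros y Hy; exists (r - d x y); split; [lra|].
    intros z Hz; unfold ball in Hz; specialize (Htri x y z); lra.
  - exists x; assert (d x x = 0) by (apply Hzero; auto); lra.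
Qed.

Lemma not_thick_gaps (A : nat -> Prop) :
  ~ thick A -> exists L, forall n, exists k, (k < L)%nat /\ ~ A (n + k)%nat.
Proof.
  intro Hnt; apply NNPP; intro Hn; apply Hnt; intro L.
  apply NNPP; intro Hn2; apply Hn; exists L; intro n.
  apply NNPP; intro Hn3; apply Hn2; exists n; intros k Hk.
  apply NNPP; intro Hn4; apply Hn3; exists k; auto.
Qed.

Lemma thick_not_syndetic_compl (A : nat -> Prop) :
  thick A -> ~ syndetic (fun n => ~ A n).
Proof.
  intros Ht [m Hm].
  destruct (Ht (S m)) as [n0 Hn0]; destruct (Hm n0) as [k [Hk HJ]].
  apply HJ; replace k with (n0 + (k - n0))%nat by lia; apply Hn0; lia.
Qed.

Lemma thickly_sensitive_no_syn_eq_point {X : Type} (d : X -> X -> R) (T : X -> X) :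
  is_metric d -> thickly_sensitive d T -> forall x, ~ syn_equicontinuous_point d T x.
Proof.
  intros Hmetric [de [Hde Hts]] x Hx.
  destruct (Hx de Hde) as [U [[r [Hr HballU]] HJ]].
  apply (thick_not_syndetic_compl _ (Hts _ (ball_opene d x r Hmetric Hr))).
  destruct HJ as [m Hm]; exists m; intro n.
  destruct (Hm n) as [k [Hk HJk]]; exists k; split; auto.
  intros [y1 [y2 [H1 [H2 H3]]]]; apply HJk; exists y1, y2; auto.
Qed.

Lemma Tran_syn_eq_point_of_not_thickly_sensitive {X : Type} (d : X -> X -> R)
  (T : X -> X) :
  continuous_map d T -> ~ thickly_sensitive d T ->
  forall x, Tran d T x -> syn_equicontinuous_point d T x.
Proof.
  intros Hc Hnts x Hx eps He.
  assert (HU : exists U, opene d U /\ ~ thick (S_T d T U eps)).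
  { apply NNPP; intro Hn; apply Hnts; exists eps; split; auto.
    intros U HU; apply NNPP; intro Ht; apply Hn; exists U; auto. }
  destruct HU as [U [HUo Hnt]].
  destruct (not_thick_gaps _ Hnt) as [L HL].
  destruct (Hx U HUo) as [n Hn].
  destruct (proj1 HUo _ Hn) as [r [Hr Hball]].
  destruct (iter_continuous d T Hc n x r Hr) as [de [Hde Hcd]].
  exists (fun y => U (iter T n y)); split.
  - exists de; split; auto; intros y Hy; apply Hball, Hcd, Hy.
  - exists (L + n)%nat; intro N; destruct (HL N) as [k [Hk HJ]].
    exists (N + k + n)%nat; split; [lia|].
    intro HS; exact (HJ (S_T_preimage d T U eps n _ HS)).
Qed.

Theorem theorem3p4 (X : Type) (d : X -> X -> R) (T : X -> X)
  (Hmetric : is_metric d) (Hcompact : compact_metric d)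
  (Hcont : continuous_map d T) (Hsurj : surjective_map T) :
  (top_transitive d T ->
     (thickly_sensitive d T /\ (forall x, ~ syn_equicontinuous_point d T x))
     \/ (forall x, Tran d T x -> syn_equicontinuous_point d T x))
  /\
  (minimal_system d T -> thickly_sensitive d T \/ syndetically_equicontinuous d T).
Proof.
  split; [intros _ | intros Hmin];
    destruct (classic (thickly_sensitive d T)) as [Hts | Hnts].
  - left; split; auto; apply thickly_sensitive_no_syn_eq_point; auto.
  - right; apply Tran_syn_eq_point_of_not_thickly_sensitive; auto.
  - left; auto.
  - right; intro x; apply Tran_syn_eq_point_of_not_thickly_sensitive; auto.
Qed.
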